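(* Let $G=(V,E,w)$ be a connected graph with uniform weights, $w_{ij}=1$ for all $\{i,j\}\in E$. Then \[ \frac{\mathrm{PROD}(G)}{\mathrm{OPT}(G)}\geq\frac13+\frac23\left(\frac{|E|}{2|E|+|V|}\right). \] Moreover, there exists a computational basis state $|s\rangle$, $s\in\{0,1\}^{|V|}$, whose energy $\langle s|H_G|s\rangle$ satisfies this inequality in place of $\mathrm{PROD}(G)$.
   Context: Qubits are placed on the vertices of $G$; with Pauli operators $X_i,Y_i,Z_i$ on qubit $i$, define $h_{ij}=\frac12(I-X_iX_j-Y_iY_j-Z_iZ_j)$ and $H_G=\sum_{\{i,j\}\in E} w_{ij}h_{ij}$. $\mathrm{OPT}(G)=\|H_G\|$ is its largest eigenvalue, and $\mathrm{PROD}(G)$ is the maximum of $\langle\phi|H_G|\phi\rangle$ over product states $\phi=\phi_1\otimes\cdots\otimes\phi_{|V|}$. *)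

From HB Require Import structures.
From mathcomp Require Import all_boot all_order all_algebra.
Set Implicit Arguments. Unset Strict Implicit. Unset Printing Implicit Defensive.
Import Order.TTheory GRing.Theory Num.Theory.
Local Open Scope ring_scope.

Section Heisenberg.
Variable C : numClosedFieldType.   (* the complex numbers (any algebraically closed numeric field) *)
Variable n : nat.                  (* qubits on vertices 'I_n *)

(* computational basis labels: s : 'I_n -> bool, with |0> = false, |1> = true *)
Definition basis_t := {ffun 'I_n -> bool}.
(* operators on (C^2)^{(x) n} as kernels on basis labels, vectors as functions *)
Definition op := basis_t -> basis_t -> C.
Definition vec := basis_t -> C.

(* single-qubit Pauli matrices, indexed (row, column) *)
Definition pauliX (a b : bool) : C := if a != b then 1 else 0.
Definition pauliY (a b : bool) : C :=
  match a, b with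
  | false, true => - 'i
  | true, false => 'i
  | _, _ => 0
  end.
Definition pauliZ (a b : bool) : C :=
  if a == b then (if a then -1 else 1) else 0.

Definition idop : op := fun x y => (x == y)%:R.

(* P_i Q_j : P on qubit i, Q on qubit j, identity elsewhere (i <> j) *)
Definition op2 (P Q : bool -> bool -> C) (i j : 'I_n) : op :=
  fun x y => P (x i) (y i) * Q (x j) (y j) *
             \prod_(k < n | (k != i) && (k != j)) (x k == y k)%:R.

Definition hterm (i j : 'I_n) : op :=
  fun x y => 2^-1 * (idop x y - op2 pauliX pauliX i j x y
                     - op2 pauliY pauliY i j x y - op2 pauliZ pauliZ i j x y).

(* edges of the simple graph e : each unordered edge {i,j} counted once as i < j *)
Definition edges (e : rel 'I_n) : {set 'I_n * 'I_n} :=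
  [set p : 'I_n * 'I_n | (p.1 < p.2)%N && e p.1 p.2].

Definition HG (e : rel 'I_n) : op :=
  fun x y => \sum_(p in edges e) hterm p.1 p.2 x y.

Definition apply (A : op) (v : vec) : vec := fun x => \sum_y A x y * v y.

Definition energy (A : op) (v : vec) : C :=
  \sum_x \sum_y (v x)^* * A x y * v y.

Definition is_eigenvalue (A : op) (lam : C) : Prop :=
  exists v : vec, (exists x, v x != 0) /\ forall x, apply A v x = lam * v x.

(* lam is the largest eigenvalue of A (OPT(G) = ||H_G|| for the PSD H_G) *)
Definition is_largest_eigenvalue (A : op) (lam : C) : Prop :=
  is_eigenvalue A lam /\ forall mu, is_eigenvalue A mu -> mu <= lam.

Definition normalized_factors (phi : 'I_n -> bool -> C) : Prop :=
  forall k, phi k false * (phi k false)^* + phi k true * (phi k true)^* = 1.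
Definition prod_state (phi : 'I_n -> bool -> C) : vec :=
  fun x => \prod_(k < n) phi k (x k).

Definition basis_state (s : basis_t) : vec := fun x => (x == s)%:R.

End Heisenberg.

From mathcomp Require Import all_boot all_order all_algebra ring zify.
Set Implicit Arguments. Unset Strict Implicit. Unset Printing Implicit Defensive.
Import Order.TTheory GRing.Theory Num.Theory.
Local Open Scope ring_scope.

(* Write [m = |E|] and [MC] for the maximum cut of [G]. On basis states,
   [h_ij = I - SWAP_ij] maps [|x>] to [[x_i != x_j] (|x> - |x'>)], where [x']
   is [x] with bits [i] and [j] flipped, so the best basis state has energy
   [MC]. Two upper bounds on [OPT] are then combined:
   - [OPT <= 3 MC - m]: the diagonal part of [H_G] is at most [MC], and the
     off-diagonal part [sum_E (X_i X_j + Y_i Y_j) / 2] is at least [m - 2 MC],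
     since [sum_E X_i X_j] is diagonal in the Hadamard basis with eigenvalues
     [m - 2 cut t], and [Y_i Y_j] is [X_i X_j] conjugated by phase gates;
   - [2 OPT <= 2 m + |V|]: the star at a vertex [i] has energy at most
     [deg i + 1], and summing the stars counts every edge twice.
   The convex combination [1/3 (3 MC - m - OPT) + 1/3 m/(2m+|V|) (2m+|V| - 2 OPT)]
   of the two slacks is [MC - ratio * OPT]. *)

Lemma natr_eq_ffun (R : comPzSemiRingType) (I : finType) (A : eqType)
    (x y : {ffun I -> A}) :
  ((x == y)%:R : R) = \prod_k ((x k == y k)%:R : R).
Proof.
have [->|neq_xy] := eqVneq x y; first by rewrite big1 // => k _; rewrite eqxx.
have /existsP[k neq_k] : [exists k, x k != y k].
  apply: contraNT neq_xy => /existsPn eq_xy.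
  by apply/eqP/ffunP => k; apply/eqP/negbNE/eq_xy.
by rewrite (bigD1 k) //= (negbTE neq_k) mul0r.
Qed.

Lemma prodr_pair (R : comPzSemiRingType) (I : finType) (F : I -> R) (i j : I) :
  i != j -> \prod_k F k = F i * F j * \prod_(k | (k != i) && (k != j)) F k.
Proof.
move=> neq_ij; rewrite (bigD1 i) //= (bigD1 j) 1?eq_sym //= mulrA.
by congr (_ * _); apply: eq_bigl => k; rewrite andbC.
Qed.

Section BooleanCube.
Variable n : nat.
Local Notation T := (basis_t n).

Definition addb_ff (x y : T) : T := [ffun k => x k (+) y k].
Definition pair_mask (i j : 'I_n) : T := [ffun k => (k == i) || (k == j)].
Definition flip2 (i j : 'I_n) (x : T) : T := addb_ff x (pair_mask i j).

Lemma flip2E i j x k : flip2 i j x k = x k (+) ((k == i) || (k == j)).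
Proof. by rewrite !ffunE. Qed.

Lemma flip2_out i j x k : k != i -> k != j -> flip2 i j x k = x k.
Proof. by move=> /negbTE ki /negbTE kj; rewrite flip2E ki kj addbF. Qed.

Lemma flip2_l i j x : flip2 i j x i = ~~ x i.
Proof. by rewrite flip2E eqxx addbT. Qed.

Lemma flip2_r i j x : flip2 i j x j = ~~ x j.
Proof. by rewrite flip2E eqxx orbT addbT. Qed.

Lemma flip2C i j x : flip2 i j x = flip2 j i x.
Proof. by apply/ffunP => k; rewrite !flip2E orbC. Qed.

Lemma addb_ffK a : involutive (addb_ff ^~ a).
Proof. by move=> x; apply/ffunP => k; rewrite !ffunE -addbA addbb addbF. Qed.

Lemma flip2K i j : involutive (flip2 i j).
Proof. exact: addb_ffK. Qed.

Lemma flip2_neq i j x : (x == flip2 i j x) = false.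
Proof.
by apply/negbTE/eqP => /ffunP/(_ i); rewrite flip2_l; case: (x i).
Qed.

Lemma flip2_cut i j x : (flip2 i j x i != flip2 i j x j) = (x i != x j).
Proof.
have [<-|neq_ij] := eqVneq i j; first by rewrite !eqxx.
by rewrite flip2_l flip2_r; case: (x i); case: (x j).
Qed.

End BooleanCube.

Lemma sumr_delta (R : pzSemiRingType) (I : finType) (a : I) (F : I -> R) :
  \sum_i (i == a)%:R * F i = F a.
Proof.
by rewrite (bigD1 a) //= eqxx mul1r big1 ?addr0 // => i /negbTE->; rewrite mul0r.
Qed.

Section Heisenberg.
Variable C : numClosedFieldType.
Variable n : nat.
Local Notation T := (basis_t n).

Lemma hterm_kernel i j (x y : T) : i != j ->
  hterm C i j x y = (x i != x j)%:R * ((x == y)%:R - (y == flip2 i j x)%:R).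
Proof.
move=> neq_ij; rewrite /hterm /op2 /idop.
rewrite (natr_eq_ffun _ x) (natr_eq_ffun _ y) !(prodr_pair _ neq_ij).
have -> : \prod_(k | (k != i) && (k != j)) ((y k == flip2 i j x k)%:R : C) =
          \prod_(k | (k != i) && (k != j)) ((x k == y k)%:R : C).
  by apply: eq_bigr => k /andP[ki kj]; rewrite flip2_out // eq_sym.
rewrite flip2_l flip2_r.
by case: (x i); case: (y i); case: (x j); case: (y j);
  rewrite /pauliX /pauliY /pauliZ /= ?mulNr ?mulrN -?expr2 ?sqrCi; field.
Qed.

Definition sqnorm (u : vec C n) : C := \sum_x (u x)^* * u x.

Lemma sqnorm_gt0 u x : u x != 0 -> 0 < sqnorm u.
Proof.
move=> nz_ux; rewrite /sqnorm (bigD1 x) //=; apply: ltr_wpDr.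
  by apply: sumr_ge0 => y _; rewrite mulrC mul_conjC_ge0.
by rewrite mulrC mul_conjC_gt0.
Qed.

Definition hform (u : vec C n) (i j : 'I_n) : C :=
  \sum_(x : T) (x i != x j)%:R * ((u x)^* * u x - (u x)^* * u (flip2 i j x)).

Lemma hformC u i j : hform u i j = hform u j i.
Proof. by apply: eq_bigr => x _; rewrite eq_sym flip2C. Qed.

Variable e : rel 'I_n.

Lemma edge_neq p : p \in edges e -> p.1 != p.2.
Proof. by rewrite inE => /andP[lt_p _]; rewrite neq_ltn lt_p. Qed.

Lemma HG_form u :
  \sum_x (u x)^* * apply (HG C e) u x = \sum_(p in edges e) hform u p.1 p.2.
Proof.
transitivity
    (\sum_x \sum_(p in edges e) (u x)^* * \sum_y hterm C p.1 p.2 x y * u y).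
  apply: eq_bigr => x _; rewrite /apply /HG -big_distrr /=; congr (_ * _).
  under eq_bigr do rewrite mulr_suml.
  by rewrite exchange_big.
rewrite exchange_big; apply: eq_bigr => p /edge_neq neq_p; apply: eq_bigr => x _.
under eq_bigr do rewrite hterm_kernel // -mulrA mulrBl [x == _]eq_sym.
by rewrite -mulr_sumr sumrB !sumr_delta; ring.
Qed.

Definition cut (x : T) : nat := (\sum_(p in edges e) (x p.1 != x p.2))%N.

Lemma energy_basis_state s : energy (HG C e) (basis_state C s) = (cut s)%:R.
Proof.
rewrite /energy /basis_state (bigD1 s) //= [X in _ + X]big1 => [|x /negbTE neq_xs]; last first.
  by apply: big1 => y _; rewrite neq_xs rmorph0 !mul0r.
rewrite addr0 (bigD1 s) //= [X in _ + X]big1 => [|y /negbTE neq_ys]; last by rewrite neq_ys mulr0.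
rewrite eqxx rmorph1 mul1r mulr1 addr0 /HG /cut natr_sum.
apply: eq_bigr => p /edge_neq neq_p.
by rewrite hterm_kernel // eqxx flip2_neq subr0 mulr1.
Qed.

Lemma energy_prod_indicator (A : op C n) (s : T) :
  energy A (prod_state (fun k b => (b == s k)%:R)) = energy A (basis_state C s).
Proof.
by apply: eq_bigr => x _; apply: eq_bigr => y _; rewrite /prod_state -!natr_eq_ffun.
Qed.

Lemma normalized_indicator (s : T) : normalized_factors (fun k b => ((b == s k)%:R : C)).
Proof. by move=> k; rewrite !conjC_nat; case: (s k); rewrite /= ?mulr0 ?mulr1 ?addr0 ?add0r. Qed.

End Heisenberg.

Section Hadamard.
Variable C : numClosedFieldType.
Variable n : nat.
Local Notation T := (basis_t n).

Definition bzero : T := [ffun=> false].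
Definition walsh (t x : T) : C := \prod_k (-1) ^+ (t k && x k).
Definition hadamard (u : vec C n) (t : T) : C := \sum_x walsh t x * u x.

Lemma walshC t x : walsh t x = walsh x t.
Proof. by apply: eq_bigr => k _; rewrite andbC. Qed.

Lemma walshD t x y : walsh t (addb_ff x y) = walsh t x * walsh t y.
Proof.
rewrite -big_split; apply: eq_bigr => k _ /=.
by rewrite ffunE -signr_addb; case: (t k).
Qed.

Lemma conj_walsh t x : (walsh t x)^* = walsh t x.
Proof. by rewrite rmorph_prod; apply: eq_bigr => k _; rewrite rmorph_sign. Qed.

Lemma walsh0 t : walsh t bzero = 1.
Proof. by rewrite /walsh big1 // => k _; rewrite ffunE andbF. Qed.

Lemma addb_ff0 x : addb_ff x bzero = x.
Proof. by apply/ffunP => k; rewrite !ffunE addbF. Qed.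

Lemma addb_ff_eq0 x y a : (addb_ff (addb_ff x y) a == bzero) = (y == addb_ff x a).
Proof.
apply/eqP/eqP => [/ffunP eq0 | ->]; apply/ffunP => k.
  by move: (eq0 k); rewrite !ffunE; case: (x k); case: (y k); case: (a k).
by rewrite !ffunE; case: (x k); case: (a k).
Qed.

Lemma card_basis : #|{: T}| = (2 ^ n)%N.
Proof. by rewrite card_ffun card_bool card_ord. Qed.

(* Character orthogonality: a nonzero [c] is detected by some [k] with
   [c k], and translating [t] by the unit vector at [k] flips every sign. *)
Lemma sum_walsh c : \sum_t walsh t c = if c == bzero then (2 ^ n)%:R else 0.
Proof.
have [->|nz_c] := eqVneq c bzero.
  by under eq_bigr do rewrite walsh0; rewrite sumr_const card_basis.
have /existsP[k c_k] : [exists k, c k].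
  apply: contraNT nz_c => /existsPn c0.
  by apply/eqP/ffunP => k; rewrite ffunE; apply/negbTE/c0.
pose ek : T := [ffun l => l == k].
have walsh_ek : walsh ek c = -1.
  rewrite /walsh (bigD1 k) //= big1 ?mulr1; first by rewrite ffunE eqxx c_k.
  by move=> l /negbTE neq_lk; rewrite ffunE neq_lk.
set S := \sum_t _.
have S_opp : S = - S.
  rewrite {1}/S (reindex_inj (inv_inj (addb_ffK ek))) /= /S -sumrN.
  by apply: eq_bigr => t _; rewrite walshC walshD [walsh c ek]walshC walsh_ek mulrN1 walshC.
by move/eqP: S_opp; rewrite -subr_eq0 opprK -mulr2n mulrn_eq0 => /eqP.
Qed.

Lemma hadamard_corr (u : vec C n) a :
  \sum_t (hadamard u t)^* * hadamard u t * walsh t a =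
  (2 ^ n)%:R * \sum_x (u x)^* * u (addb_ff x a).
Proof.
transitivity
    (\sum_x \sum_y (u x)^* * u y * \sum_t walsh t (addb_ff (addb_ff x y) a)).
  rewrite /hadamard.
  under eq_bigr do rewrite rmorph_sum /= mulr_suml mulr_suml.
  rewrite exchange_big; apply: eq_bigr => x _.
  under eq_bigr do rewrite mulr_sumr mulr_suml.
  rewrite exchange_big; apply: eq_bigr => y _.
  rewrite mulr_sumr; apply: eq_bigr => t _.
  rewrite rmorphM /= conj_walsh !walshD; ring.
rewrite mulr_sumr; apply: eq_bigr => x _.
under eq_bigr do rewrite sum_walsh addb_ff_eq0.
rewrite (bigD1 (addb_ff x a)) //= eqxx big1 ?addr0 => [|y /negbTE->]; last first.
  by rewrite mulr0.
by rewrite mulrC.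
Qed.

Lemma parseval (u : vec C n) :
  (2 ^ n)%:R * sqnorm u = \sum_t (hadamard u t)^* * hadamard u t.
Proof.
have := hadamard_corr u bzero.
under eq_bigr do rewrite walsh0 mulr1.
by move=> ->; congr (_ * _); apply: eq_bigr => x _; rewrite addb_ff0.
Qed.

Lemma walsh_pair_mask t i j : i != j ->
  walsh t (pair_mask i j) = 1 - 2 * (t i != t j)%:R.
Proof.
move=> neq_ij; rewrite /walsh (prodr_pair _ neq_ij) big1 ?mulr1.
  by rewrite !ffunE !eqxx orbT /=; case: (t i); case: (t j); rewrite /=; ring.
by move=> k /andP[/negbTE ki /negbTE kj]; rewrite ffunE ki kj andbF.
Qed.

End Hadamard.

Section MaxCutBound.
Variable C : numClosedFieldType.
Variable n : nat.
Variable e : rel 'I_n.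
Local Notation T := (basis_t n).

Definition maxcut : nat := \max_(s : T) cut e s.

Lemma cut_le_maxcut s : (cut e s <= maxcut)%N.
Proof. exact: (@leq_bigmax _ (cut e) s). Qed.

Lemma maxcut_attained : exists s : T, cut e s = maxcut.
Proof.
by exists [arg max_(s > bzero n) cut e s]; rewrite /maxcut (bigop.bigmax_eq_arg (bzero n)).
Qed.

(* [<u| sum_E X_i X_j |u>] *)
Definition xx_form (u : vec C n) : C :=
  \sum_(p in edges e) \sum_x (u x)^* * u (flip2 p.1 p.2 x).

(* In the Hadamard basis [X_i X_j] is diagonal with eigenvalue
   [1 - 2 [t_i != t_j]], so [sum_E X_i X_j] has eigenvalues [|E| - 2 cut t]. *)
Lemma xx_form_ge u : ((#|edges e|)%:R - 2 * maxcut%:R) * sqnorm u <= xx_form u.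
Proof.
have diag : (2 ^ n)%:R * xx_form u =
    \sum_t (hadamard u t)^* * hadamard u t * ((#|edges e|)%:R - 2 * (cut e t)%:R).
  rewrite /xx_form mulr_sumr.
  transitivity (\sum_(p in edges e) \sum_t
      (hadamard u t)^* * hadamard u t * walsh C t (pair_mask p.1 p.2)).
    by apply: eq_bigr => p _; rewrite hadamard_corr.
  rewrite exchange_big; apply: eq_bigr => t _; rewrite -mulr_sumr; congr (_ * _).
  under eq_bigr => p /edge_neq neq_p do rewrite walsh_pair_mask //.
  by rewrite sumrB sumr_const /cut natr_sum mulr_sumr.
have pos2n : (0 : C) < (2 ^ n)%:R by rewrite ltr0n expn_gt0.
rewrite -(ler_pM2l pos2n) diag mulrCA parseval mulr_sumr.
apply: ler_sum => t _; rewrite mulrC; apply: ler_wpM2l.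
  by rewrite mulrC mul_conjC_ge0.
by rewrite lerB // ler_wpM2l // ler_nat cut_le_maxcut.
Qed.

Definition phase (x : T) : C := \prod_k 'i ^+ x k.
Definition rotate (u : vec C n) : vec C n := fun x => phase x * u x.

Lemma conjCiX_mul (b : bool) : ('i ^+ b)^* * 'i ^+ b = 1 :> C.
Proof. by case: b; rewrite ?expr0 ?expr1 ?rmorph1 ?mulr1 // conjCi mulNr -expr2 sqrCi opprK. Qed.


Lemma phase_unit x : (phase x)^* * phase x = 1.
Proof. by rewrite rmorph_prod -big_split big1 // => k _ /=; rewrite conjCiX_mul. Qed.

Lemma phase_flip2 x i j : i != j ->
  (phase x)^* * phase (flip2 i j x) = - ((-1) ^+ x i * (-1) ^+ x j).
Proof.
move=> neq_ij; rewrite rmorph_prod -big_split /= (prodr_pair _ neq_ij) big1 ?mulr1.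
  have sqri : 'i * 'i = -1 :> C by rewrite -expr2 sqrCi.
  rewrite flip2_l flip2_r.
  by case: (x i); case: (x j);
    rewrite /= ?expr0 ?expr1 ?rmorph1 ?conjCi ?mulr1 ?mul1r ?mulrNN ?mulNr ?mulrN ?sqri ?opprK ?mulr1.
by move=> k /andP[ki kj] /=; rewrite flip2_out // conjCiX_mul.
Qed.

Lemma sqnorm_rotate u : sqnorm (rotate u) = sqnorm u.
Proof.
by apply: eq_bigr => x _; rewrite /rotate rmorphM /= mulrACA phase_unit mul1r.
Qed.

(* [[x_i != x_j] flip2 i j = (X_i X_j + Y_i Y_j) / 2], and [Y_i Y_j] is
   [X_i X_j] conjugated by the diagonal unitary [rotate]. *)
Lemma antialigned_form u i j : i != j ->
  2 * \sum_(x : T) (x i != x j)%:R * ((u x)^* * u (flip2 i j x)) =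
  \sum_x (u x)^* * u (flip2 i j x) + \sum_x (rotate u x)^* * rotate u (flip2 i j x).
Proof.
move=> neq_ij; rewrite -big_split mulr_sumr; apply: eq_bigr => x _ /=.
rewrite /rotate rmorphM /= mulrACA phase_flip2 //.
by case: (x i); case: (x j); rewrite /= ?expr0 ?expr1; ring.
Qed.

Lemma hform_le_maxcut (u : vec C n) : \sum_(p in edges e) hform u p.1 p.2 <=
  ((3 * maxcut)%:R - (#|edges e|)%:R) * sqnorm u.
Proof.
rewrite /hform; under eq_bigr do (under eq_bigr do rewrite mulrBr; rewrite sumrB).
rewrite sumrB.
have diag_le : \sum_(p in edges e) \sum_(x : T)
    (x p.1 != x p.2)%:R * ((u x)^* * u x) <= maxcut%:R * sqnorm u.
  rewrite exchange_big /sqnorm mulr_sumr; apply: ler_sum => x _.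
  rewrite -mulr_suml ler_wpM2r ?(mulrC _ (u x)) ?mul_conjC_ge0 //.
  by rewrite -natr_sum ler_nat cut_le_maxcut.
have offdiag_ge : ((#|edges e|)%:R - 2 * maxcut%:R) * sqnorm u <= \sum_(p in edges e)
    \sum_(x : T) (x p.1 != x p.2)%:R * ((u x)^* * u (flip2 p.1 p.2 x)).
  rewrite -(@ler_pM2l _ 2) // [X in _ <= X]mulr_sumr.
  under eq_bigr => p /edge_neq neq_p do rewrite antialigned_form //.
  rewrite big_split /= (mulr_natl _ 2) mulr2n.
  by have := lerD (xx_form_ge u) (xx_form_ge (rotate u)); rewrite sqnorm_rotate.
apply: le_trans (lerB diag_le offdiag_ge) _.
by rewrite le_eqVlt natrM; apply/orP; left; apply/eqP; ring.
Qed.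

End MaxCutBound.

Lemma conj_form_ge0 (C : numClosedFieldType) (r a b : C) : 0 < r ->
  0 <= r * (a^* * a) + a^* * b + (r^-1 * (b^* * b) + b^* * a).
Proof.
move=> r_gt0; have r_conj : r^* = r by rewrite geC0_conj // ltW.
have -> : r * (a^* * a) + a^* * b + (r^-1 * (b^* * b) + b^* * a) =
    r^-1 * ((r * a + b) * (r * a + b)^*).
  by rewrite rmorphD rmorphM /= r_conj; field; rewrite gt_eqF.
by rewrite mulr_ge0 ?invr_ge0 ?mul_conjC_ge0 // ltW.
Qed.

Section Star.
Variable C : numClosedFieldType.
Variable n : nat.
Variable e : rel 'I_n.
Hypothesis e_irr : irreflexive e.
Local Notation T := (basis_t n).

Lemma neq_of_edge i j : e i j -> i != j.
Proof. by apply: contraTneq => ->; rewrite e_irr. Qed.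

Variable i : 'I_n.

Definition deg : nat := \sum_(j | e i j) 1.
Definition cut_deg (x : T) : nat := \sum_(j | e i j) (x i != x j).

Lemma cut_deg_le x : (cut_deg x <= deg)%N.
Proof. by apply: leq_sum => j _; rewrite leq_b1. Qed.

Lemma cut_deg_flip2 j (x : T) : e i j -> x i != x j ->
  (cut_deg (flip2 i j x) + cut_deg x)%N = deg.+1.
Proof.
move=> eij xij; have neq_ij := neq_of_edge eij.
rewrite /cut_deg /deg -big_split /= (bigD1 j) //= [in RHS](bigD1 j) //=.
have -> : (\sum_(l | e i l && (l != j)) ((flip2 i j x i != flip2 i j x l) + (x i != x l)))%N =
          (\sum_(l | e i l && (l != j)) 1)%N.
  apply: eq_bigr => l /andP[eil neq_lj].
  have neq_li : l != i by rewrite eq_sym; exact: neq_of_edge.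
  by rewrite flip2_l flip2_out //; case: (x i); case: (x l).
by rewrite flip2_cut xij.
Qed.

Lemma cut_deg_gt0 j (x : T) : e i j -> x i != x j -> (0 < cut_deg x)%N.
Proof. by move=> eij xij; rewrite /cut_deg (bigD1 j) //= xij. Qed.

Definition star_term (u : vec C n) j (x : T) : C := (x i != x j)%:R *
  ((deg.+1 - cut_deg x)%:R / (cut_deg x)%:R * ((u x)^* * u x) + (u x)^* * u (flip2 i j x)).

(* [flip2 i j] is an involution exchanging [cut_deg] and [deg.+1 - cut_deg]
   on the states cut by [ij]; each orbit [{x, flip2 i j x}] contributes an
   instance of [conj_form_ge0]. *)
Lemma star_term_sum_ge0 u j : e i j -> 0 <= \sum_x star_term u j x.
Proof.
move=> eij; set S := \sum_x _.
have S2 : S *+ 2 = \sum_x (star_term u j x + star_term u j (flip2 i j x)).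
  by rewrite mulr2n {2}/S (reindex_inj (inv_inj (flip2K i j))) -big_split.
rewrite -(pmulrn_lge0 _ (isT : (0 < 2)%N)) S2.
apply: sumr_ge0 => x _; rewrite /star_term flip2_cut flip2K.
have [xij|] := boolP (x i != x j); last by rewrite !mul0r addr0.
have cut_fl := cut_deg_flip2 eij xij; have cut_pos := cut_deg_gt0 eij xij.
have cut_le := cut_deg_le x.
rewrite !mul1r (_ : deg.+1 - cut_deg x = cut_deg (flip2 i j x))%N; last by lia.
rewrite (_ : deg.+1 - cut_deg (flip2 i j x) = cut_deg x)%N; last by lia.
rewrite -[_%:R / _%:R in X in _ + X]invf_div.
by apply: conj_form_ge0; rewrite divr_gt0 // ltr0n; lia.
Qed.

Lemma star_form_le (u : vec C n) :
  \sum_(j | e i j) hform u i j <= (deg.+1)%:R * sqnorm u.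
Proof.
set S := \sum_(j | e i j) \sum_(x : T) (x i != x j)%:R * ((u x)^* * u (flip2 i j x)).
set W := \sum_(x : T) (deg.+1 - cut_deg x)%:R * ((u x)^* * u x).
have hform_sum : \sum_(j | e i j) hform u i j =
    \sum_(x : T) (cut_deg x)%:R * ((u x)^* * u x) - S.
  rewrite /hform; under eq_bigr do (under eq_bigr do rewrite mulrBr; rewrite sumrB).
  rewrite sumrB exchange_big; congr (_ - _); apply: eq_bigr => x _.
  by rewrite -mulr_suml /cut_deg natr_sum.
have cross_ge : 0 <= W + S.
  have : 0 <= \sum_(j | e i j) \sum_x star_term u j x.
    by apply: sumr_ge0 => j; apply: star_term_sum_ge0.
  move/le_trans; apply.
  rewrite /star_term; under eq_bigr do (under eq_bigr do rewrite mulrDr; rewrite big_split).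
  rewrite big_split /= lerD2r exchange_big; apply: ler_sum => x _.
  rewrite -mulr_suml -natr_sum -/(cut_deg x) [X in X <= _]mulrA.
  rewrite ler_wpM2r ?(mulrC _ (u x)) ?mul_conjC_ge0 //.
  have [->|nz] := eqVneq (cut_deg x) 0%N; first by rewrite mul0r ler0n.
  by rewrite mulrC divfK ?pnatr_eq0.
have -> : (deg.+1)%:R * sqnorm u =
    \sum_(x : T) (cut_deg x)%:R * ((u x)^* * u x) + W.
  rewrite /sqnorm mulr_sumr -big_split; apply: eq_bigr => x _ /=.
  by rewrite -mulrDl -natrD subnKC // leqW // cut_deg_le.
by rewrite hform_sum lerD2l -subr_ge0 opprK.
Qed.

End Star.

Section DegreeBound.
Variable n : nat.
Variable e : rel 'I_n.
Hypothesis e_sym : symmetric e.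
Hypothesis e_irr : irreflexive e.

Lemma sum_adj_sym (R : nmodType) (G : 'I_n -> 'I_n -> R) :
    (forall i j, G i j = G j i) ->
  \sum_i \sum_(j | e i j) G i j = (\sum_(p in edges e) G p.1 p.2) *+ 2.
Proof.
move=> G_sym; rewrite pair_big_dep /= (bigID (fun p : 'I_n * 'I_n => (p.1 < p.2)%N)).
rewrite mulr2n /=; congr (_ + _); first by apply: eq_bigl => p; rewrite inE andbC.
have swapK : involutive (fun p : 'I_n * 'I_n => (p.2, p.1)) by case.
rewrite (reindex_inj (inv_inj swapK)) /=.
apply: eq_big => [[a b]|[a b] _] /=; last exact: G_sym.
rewrite inE /= e_sym -leqNgt; have [eab|_] := boolP (e a b); last by rewrite andbF.
by rewrite andbT ltn_neqAle (neq_of_edge e_irr eab).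
Qed.

Lemma sum_deg : (\sum_j (deg e j).+1 = 2 * #|edges e| + n)%N.
Proof.
under eq_bigr do rewrite -addn1.
rewrite big_split /= sum_adj_sym // sum1_card sum_nat_const card_ord.
by rewrite mulr2n muln1 mul2n; congr (_ + _); apply: addnn.
Qed.

Lemma hform_le_degree (C : numClosedFieldType) (u : vec C n) :
  2 * \sum_(p in edges e) hform u p.1 p.2 <= (2 * #|edges e| + n)%:R * sqnorm u.
Proof.
rewrite mulr_natl -sum_adj_sym; last exact: hformC.
apply: (@le_trans _ _ (\sum_j (deg e j).+1%:R * sqnorm u)).
  by apply: ler_sum => j _; apply: star_form_le.
by rewrite -mulr_suml -natr_sum sum_deg.
Qed.

End DegreeBound.

Lemma eigenvalue_le_of_form (C : numClosedFieldType) n (A : op C n) (k b lam : C) :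
    (forall u, k * \sum_x (u x)^* * apply A u x <= b * sqnorm u) ->
  is_eigenvalue A lam -> k * lam <= b.
Proof.
move=> form_le [v [[x nz_vx] eig_v]].
have form_v : \sum_x (v x)^* * apply A v x = lam * sqnorm v.
  by rewrite /sqnorm mulr_sumr; apply: eq_bigr => y _; rewrite eig_v mulrCA.
by rewrite -(ler_pM2r (sqnorm_gt0 nz_vx)) -mulrA -form_v.
Qed.

Lemma ratio_mul_le (R : numFieldType) (M m D x : R) : 0 <= m -> 0 < D ->
  x <= 3 * M - m -> 2 * x <= D -> (1 / 3 + 2 / 3 * (m / D)) * x <= M.
Proof.
move=> m_ge0 D_gt0 x_le3 x_le2; rewrite -subr_ge0.
have -> : M - (1 / 3 + 2 / 3 * (m / D)) * x =
    3^-1 * (3 * M - m - x) + 3^-1 * (m / D) * (D - 2 * x).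
  by field; rewrite gt_eqF.
by rewrite addr_ge0 // !mulr_ge0 ?invr_ge0 ?divr_ge0 ?subr_ge0 // ltW.
Qed.

Unset Implicit Arguments.
Set Strict Implicit.

Theorem theorem5 (C : numClosedFieldType) (n : nat) (e : rel 'I_n)
  (e_sym : symmetric e) (e_irr : irreflexive e) (n_pos : (0 < n)%N)
  (e_conn : forall i j : 'I_n, connect e i j)
  (opt : C) (Hopt : is_largest_eigenvalue (HG C e) opt) :
  let ratio : C := 1 / 3 + 2 / 3 *
      ((#|edges e|)%:R / (2 * #|edges e| + n)%:R) in
  (exists phi : 'I_n -> bool -> C, normalized_factors phi /\
       ratio * opt <= energy (HG C e) (prod_state phi)) /\
  (exists s : basis_t n, ratio * opt <= energy (HG C e) (basis_state C s)).
Proof.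
move=> ratio; case: Hopt => opt_eig _.
have [s cut_s] := maxcut_attained e.
have ratio_le : ratio * opt <= energy (HG C e) (basis_state C s).
  rewrite energy_basis_state cut_s; apply: ratio_mul_le.
  - exact: ler0n.
  - by rewrite ltr0n; lia.
  - rewrite -[opt]mul1r -natrM; apply: (eigenvalue_le_of_form _ opt_eig) => u.
    by rewrite mul1r HG_form; apply: hform_le_maxcut.
  - apply: (eigenvalue_le_of_form _ opt_eig) => u.
    by rewrite HG_form; apply: hform_le_degree.
split; last by exists s.
exists (fun k b => (b == s k)%:R); split; first exact: normalized_indicator.
by rewrite energy_prod_indicator.
Qed.
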